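(* Let $\{\mathcal{T}^\pi\}_{\pi\in\Pi}$ be a consistency operator, i.e. a family of maps $\mathcal{T}^\pi:\mathbb{R}^{\mathcal{S}}\to\mathbb{R}^{\mathcal{S}}$ indexed by policies $\pi\in\Pi$. (i) If $\mathcal{T}^\pi$ is linear, then it enables the greedy policy. (ii) If $\mathcal{T}^\pi$ enables the greedy policy, then there exists a linear consistency operator $\mathcal{T}^\pi_{\mathrm{linear}}$ such that for all $v\in\mathbb{R}^{\mathcal{S}}$ and $s\in\mathcal{S}$, $\max_{\pi\in\Pi}[\mathcal{T}^\pi v](s) = \max_{\pi\in\Pi}[\mathcal{T}^\pi_{\mathrm{linear}} v](s)$.
   Context: $\mathcal{S},\mathcal{A}$ are finite sets and $\Pi = \Delta(\mathcal{A})^{\mathcal{S}}$ is the set of all stationary (stochastic and deterministic) policies, a policy being $\pi\in\mathbb{R}^{\mathcal{S}\times\mathcal{A}}$ with $\pi[s,\cdot]\in\Delta(\mathcal{A})$ for each $s$. A consistency operator $\mathcal{T}^\pi$ enables the greedy policy if there is a function $g:\mathbb{R}^{\mathcal{S}}\times\mathcal{A}\to\mathbb{R}^{\mathcal{S}}$ such that for all $v\in\mathbb{R}^{\mathcal{S}}$ and $s\in\mathcal{S}$, $\max_{a\in\mathcal{A}} g(v,a)[s] = \max_{\pi\in\Pi}[\mathcal{T}^\pi v](s)$. It is linear if there is a function $f:\mathbb{R}^{\mathcal{S}}\to\mathbb{R}^{\mathcal{S}\times\mathcal{A}}$, independent of $\pi$, such that for all $\pi\in\Pi$, $v\in\mathbb{R}^{\mathcal{S}}$,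 $s\in\mathcal{S}$: $[\mathcal{T}^\pi v](s) = \langle \pi[s,\cdot], f(v)[s,\cdot]\rangle$. *)

From HB Require Import structures.
From mathcomp Require Import all_boot all_order all_algebra.
From mathcomp Require Import reals.
Set Implicit Arguments. Unset Strict Implicit. Unset Printing Implicit Defensive.
Import Order.TTheory GRing.Theory Num.Theory.
Local Open Scope ring_scope.

Section Defs.
Variables (R : realType) (S A : finType).

Definition is_policy (pi : S -> A -> R) : Prop :=
  forall s, (forall a, 0 <= pi s a) /\ \sum_(a : A) pi s a = 1.

(* A consistency operator: a family T^pi : R^S -> R^S indexed by policies
   (values at non-policies are irrelevant). *)
Definition cons_op := (S -> A -> R) -> (S -> R) -> (S -> R).

Definition is_max (P : R -> Prop) (m : R) : Prop :=
  P m /\ forall x, P x -> x <= m.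

Definition pol_vals (T : cons_op) (v : S -> R) (s : S) : R -> Prop :=
  fun x => exists pi, is_policy pi /\ x = T pi v s.

Definition enables_greedy (T : cons_op) : Prop :=
  exists g : (S -> R) -> A -> S -> R,
    forall v s, exists m,
      is_max (fun x => exists a, x = g v a s) m /\ is_max (pol_vals T v s) m.

Definition linear_op (T : cons_op) : Prop :=
  exists f : (S -> R) -> S -> A -> R,
    forall pi, is_policy pi -> forall v s,
      T pi v s = \sum_(a : A) pi s a * f v s a.
End Defs.

From HB Require Import structures.
From mathcomp Require Import all_boot all_order all_algebra.
From mathcomp Require Import reals.
Import Order.TTheory GRing.Theory Num.Theory.
Local Open Scope ring_scope.

(* A policy average [\sum_a pi s a * q a] of action values is a convex
   combination of them, so it never exceeds [max_a q a], and the deterministic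
   policy choosing a maximising action attains that bound.  Hence a linear
   operator enables the greedy policy with [g v a s := f v s a]; conversely,
   the greedy function [g] of any operator defines the linear operator
   [pi v s |-> \sum_a pi s a * g v a s], whose maxima are those of [g]. *)

Section LinearConsistency.
Local Set Implicit Arguments.
Local Unset Strict Implicit.
Context {R : realType} {S A : finType}.

Lemma is_max_ext (P Q : R -> Prop) (m : R) :
  is_max P m -> (forall x, P x <-> Q x) -> is_max Q m.
Proof. by move=> [Pm Pub] PQ; split=> [|x /PQ /Pub]; first exact/PQ. Qed.

Lemma is_max_image (a0 : A) (q : A -> R) :
  exists m, is_max (fun x => exists a, x = q a) m.
Proof.
have [b _ qb_max] := @arg_maxP _ R A a0 predT q isT.
exists (q b); split; first by exists b.
by move=> _ [a ->]; exact: qb_max.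
Qed.

Definition dirac_policy (b : A) : S -> A -> R := fun _ a => (a == b)%:R.

Lemma sum_dirac_policy (b : A) (s : S) (q : A -> R) :
  \sum_(a : A) dirac_policy b s a * q a = q b.
Proof.
rewrite (bigD1 b) //= /dirac_policy eqxx mul1r big1 ?addr0 // => a /negbTE ab.
by rewrite ab mul0r.
Qed.

Lemma dirac_policy_is_policy (b : A) : is_policy (dirac_policy b).
Proof.
move=> s; split=> [a|]; first exact: ler0n.
by under eq_bigr do rewrite -[dirac_policy b s _]mulr1; rewrite sum_dirac_policy.
Qed.

Lemma policy_average_le (pi : S -> A -> R) (s : S) (q : A -> R) (m : R) :
  is_policy pi -> (forall a, q a <= m) -> \sum_(a : A) pi s a * q a <= m.
Proof.
move=> /(_ s) [pi_ge0 pi_sum1] q_le_m.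
rewrite -[m]mul1r -pi_sum1 mulr_suml.
by apply: ler_sum => a _; apply: ler_wpM2l.
Qed.

Definition lin_op (f : (S -> R) -> S -> A -> R) : cons_op R S A :=
  fun pi v s => \sum_(a : A) pi s a * f v s a.

Lemma lin_op_linear (f : (S -> R) -> S -> A -> R) : linear_op (lin_op f).
Proof. by exists f. Qed.

Lemma is_max_lin_op (f : (S -> R) -> S -> A -> R) (v : S -> R) (s : S) (m : R) :
  is_max (fun x => exists a, x = f v s a) m -> is_max (pol_vals (lin_op f) v s) m.
Proof.
move=> [[b ->] f_le]; split.
  by exists (dirac_policy b); rewrite /lin_op sum_dirac_policy;
     split=> //; exact: dirac_policy_is_policy.
move=> _ [pi [pi_policy ->]].
by apply: policy_average_le => // a; apply: f_le; exists a.
Qed.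

Lemma pol_vals_lin_op (T : cons_op R S A) (f : (S -> R) -> S -> A -> R) :
  (forall pi, is_policy pi -> forall v s, T pi v s = \sum_(a : A) pi s a * f v s a) ->
  forall v s x, pol_vals (lin_op f) v s x <-> pol_vals T v s x.
Proof.
move=> Tf v s x.
by split=> -[pi [pi_policy ->]]; exists pi; split; rewrite // Tf.
Qed.

End LinearConsistency.

Theorem lemma1 (R : realType) (S A : finType) (a0 : A) (T : cons_op R S A) :
  (linear_op T -> enables_greedy T) /\
  (enables_greedy T ->
     exists Tlin : cons_op R S A, linear_op Tlin /\
       forall v s, exists m, is_max (pol_vals T v s) m /\ is_max (pol_vals Tlin v s) m).
Proof.
split.
  move=> [f Tf]; exists (fun v a s => f v s a) => v s.
  have [m max_f] := is_max_image a0 (f v s).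
  exists m; split=> //.
  apply: is_max_ext (is_max_lin_op max_f) _.
  exact: pol_vals_lin_op Tf v s.
move=> [g g_greedy].
exists (lin_op (fun v s a => g v a s)); split; first exact: lin_op_linear.
move=> v s; have [m [max_g max_T]] := g_greedy v s.
by exists m; split=> //; apply: is_max_lin_op.
Qed.
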